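(* Let $n\ge 3$ and consider the Markov chain on the state space $\{0,1,\dots,n-1\}$ with the $n\times n$ transition probability matrix $\mathbf P=(P_{ij})$ given by: $P_{00}=5/6$, $P_{01}=1/6$; $P_{10}=5/6$, $P_{12}=1/6$; for $2\le i\le n-2$: $P_{i0}=2/3$, $P_{i,i-1}=1/6$, $P_{i,i+1}=1/6$; $P_{n-1,0}=5/6$, $P_{n-1,n-2}=1/6$; and all other entries $0$. Then the steady state probability vector, i.e. the unique probability vector $\vec\pi=(\pi_0,\dots,\pi_{n-1})$ with $\vec\pi=\vec\pi\mathbf P$ and $\sum_i\pi_i=1$, is $$\vec\pi=\left(\frac{2B_n}{b_{n+1}},\frac{2B_{n-1}}{b_{n+1}},\dots,\frac{2B_1}{b_{n+1}}\right),$$ that is, $\pi_i=\dfrac{2B_{n-i}}{b_{n+1}}$ for $i=0,1,\dots,n-1$.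
   Context: The balancing numbers $B_m$ are defined by $B_0=0$, $B_1=1$, $B_{m+1}=6B_m-B_{m-1}$ (so $B_2=6$, $B_3=35,\dots$). The cobalancing numbers $b_m$ are defined by $b_0=0$, $b_1=0$, $b_{m+1}=6b_m-b_{m-1}+2$ (so $b_2=2$, $b_3=14,\dots$). *)

From HB Require Import structures.
From mathcomp Require Import all_boot all_order all_algebra.
Set Implicit Arguments. Unset Strict Implicit. Unset Printing Implicit Defensive.
Import Order.TTheory GRing.Theory Num.Theory.
Local Open Scope ring_scope.

Fixpoint Bpair (m : nat) : int * int :=
  match m with
  | 0%N => (0, 1)
  | m'.+1 => let: (x, y) := Bpair m' in (y, 6 * y - x)
  end.
(* balancing numbers: B_0 = 0, B_1 = 1, B_{m+1} = 6 B_m - B_{m-1} *)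
Definition balancing (m : nat) : int := (Bpair m).1.

Fixpoint bpair (m : nat) : int * int :=
  match m with
  | 0%N => (0, 0)
  | m'.+1 => let: (x, y) := bpair m' in (y, 6 * y - x + 2)
  end.
(* cobalancing numbers: b_0 = 0, b_1 = 0, b_{m+1} = 6 b_m - b_{m-1} + 2 *)
Definition cobalancing (m : nat) : int := (bpair m).1.

(* transition probability P_{ij} of the chain on {0,...,n-1} (intended n >= 3) *)
Definition Pentry (R : fieldType) (n i j : nat) : R :=
  if i == 0%N then
    (if j == 0%N then 5/6 else if j == 1%N then 1/6 else 0)
  else if i == 1%N then
    (if j == 0%N then 5/6 else if j == 2%N then 1/6 else 0)
  else if i == n.-1 then
    (if j == 0%N then 5/6 else if j == (n - 2)%N then 1/6 else 0)
  else
    (if j == 0%N then 2/3 else if j == i.-1 then 1/6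
     else if j == i.+1 then 1/6 else 0).

Definition Pmat (R : fieldType) (n : nat) : 'M[R]_n :=
  \matrix_(i < n, j < n) Pentry R n i j.

Definition prob_vec (R : numFieldType) (n : nat) (p : 'rV[R]_n) : Prop :=
  (forall i, 0 <= p 0 i) /\ \sum_(i < n) p 0 i = 1.

Lemma Bcheck : [:: balancing 0; balancing 1; balancing 2; balancing 3] = [:: 0; 1; 6; 35].
Proof. by []. Qed.
Lemma bcheck : [:: cobalancing 0; cobalancing 1; cobalancing 2; cobalancing 3; cobalancing 4] = [:: 0; 0; 2; 14; 84].
Proof. by []. Qed.

From HB Require Import structures.
From mathcomp Require Import all_boot all_order all_algebra.
From mathcomp Require Import zify ring lra.
Import Order.TTheory GRing.Theory Num.Theory.
Local Open Scope ring_scope.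

(* Read backwards from state n-1, the balance equations at the states
   j = 1, ..., n-1 are pi_{j-1} = 6 pi_j - pi_{j+1} (with pi_n = 0), the
   balancing recurrence; hence pi_{n-k} = pi_{n-1} B_k, and normalisation forces
   pi_{n-1} = 2 / b_{n+1} since 2 (B_1 + ... + B_n) = b_{n+1}. For existence, the
   one remaining balance equation, at state 0, reduces to the identity
   2 b_{n+1} = 5 B_n - B_{n-1} - 1. The identities linking b and B are proved
   by checking that the difference of both sides satisfies the balancing
   recurrence and vanishes at 0 and 1. *)

Lemma balancingSS m : balancing m.+2 = 6 * balancing m.+1 - balancing m.
Proof. by rewrite /balancing /=; case: (Bpair m). Qed.

Lemma cobalancingSS m : cobalancing m.+2 = 6 * cobalancing m.+1 - cobalancing m + 2.
Proof. by rewrite /cobalancing /=; case: (bpair m). Qed.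

Lemma balancing_rec (R : comPzRingType) (N : nat) (x : nat -> R) :
  x 0%N = 0 -> (forall m, (m.+2 <= N)%N -> x m.+2 = 6 * x m.+1 - x m) ->
  forall m, (m <= N)%N -> x m = x 1%N * (balancing m)%:~R.
Proof.
move=> x0 xSS; elim/ltn_ind => -[|[|m]] IH hm; first by rewrite x0 mulr0.
  by rewrite mulr1.
rewrite xSS // (IH m) ?(IH m.+1); try lia.
by rewrite balancingSS intrB intrM; ring.
Qed.

Lemma balancing_rec0 (x : nat -> int) :
  x 0%N = 0 -> x 1%N = 0 -> (forall m, x m.+2 = 6 * x m.+1 - x m) -> forall m, x m = 0.
Proof. by move=> x0 x1 xSS m; rewrite (@balancing_rec _ m) // x1 mul0r. Qed.

Lemma balancing_ge0_lt m : 0 <= balancing m < balancing m.+1.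
Proof. by elim: m => [|m IH] //; rewrite balancingSS; lia. Qed.

Lemma cobalancingS m : cobalancing m.+1 = cobalancing m + 2 * balancing m.
Proof.
apply/eqP; rewrite -subr_eq0; apply/eqP.
apply: (@balancing_rec0
  (fun m => cobalancing m.+1 - (cobalancing m + 2 * balancing m))) => // {}m.
by rewrite !cobalancingSS balancingSS; ring.
Qed.

Lemma cobalancing_gt0 m : 0 < cobalancing m.+2.
Proof.
by elim: m => [|m IH] //; rewrite cobalancingS; have := balancing_ge0_lt m.+2; lia.
Qed.

Lemma cobalancingSS_balancing m :
  2 * cobalancing m.+2 = 5 * balancing m.+1 - balancing m - 1.
Proof.
apply/eqP; rewrite -subr_eq0; apply/eqP.
apply: (@balancing_rec0
  (fun m => 2 * cobalancing m.+2 - (5 * balancing m.+1 - balancing m - 1))) => // {}m.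
by rewrite !cobalancingSS !balancingSS; ring.
Qed.

Lemma sum_balancing (R : pzRingType) n :
  2 * \sum_(i < n) (balancing (n - i))%:~R = (cobalancing n.+1)%:~R :> R.
Proof.
elim: n => [|n IH]; first by rewrite big_ord0 mulr0.
rewrite big_ord_recl subn0; under eq_bigr => i _ do rewrite subSS.
by rewrite mulrDr IH (cobalancingS n.+1) intrD intrM addrC.
Qed.

Section Chain.
Context {R : realFieldType}.

(* The zero padding at index [n] supplies the boundary value pi_n = 0. *)
Definition row_nat {n} (p : 'rV[R]_n) (k : nat) : R :=
  if insub k is Some i then p 0 i else 0.

Lemma row_natE {n} (p : 'rV[R]_n) (i : 'I_n) : row_nat p i = p 0 i.
Proof. by rewrite /row_nat valK. Qed.

Lemma row_nat_out {n} (p : 'rV[R]_n) k : (n <= k)%N -> row_nat p k = 0.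
Proof. by move=> hk; rewrite /row_nat insubN // -leqNgt. Qed.

Lemma row_natK {n} (p : 'rV[R]_n) : \row_(i < n) row_nat p i = p.
Proof. by apply/rowP => i; rewrite mxE row_natE. Qed.

Lemma sum_mul_eq_nat (F : nat -> R) n k :
  \sum_(i < n) F i * (i == k :> nat)%:R = (k < n)%:R * F k.
Proof.
have [hk|hk] := ltnP k n.
  rewrite (bigD1 (Ordinal hk)) //= eqxx mulr1 mul1r big1 ?addr0 // => i.
  by rewrite -val_eqE /= => /negPf ->; rewrite mulr0.
by rewrite big1 ?mul0r // => i _; rewrite ltn_eqF ?mulr0 // (leq_trans (ltn_ord i) hk).
Qed.

Lemma Pentry_col0 n i : (3 <= n)%N -> (i < n)%N ->
  Pentry R n i 0 = 2/3 + ((i == 0)%:R + (i == 1)%:R + (i == n.-1)%:R) / 6.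
Proof.
move=> hn hi; rewrite /Pentry.
by repeat case: eqP => ?; rewrite /= ?mulr1n ?mulr0n; try lia; lra.
Qed.

Lemma Pentry_col n i j : (3 <= n)%N -> (i < n)%N -> (0 < j < n)%N ->
  Pentry R n i j = ((i == j.-1)%:R + (i == j.+1)%:R) / 6.
Proof.
move=> hn hi hj; rewrite /Pentry.
by repeat case: eqP => ?; rewrite /= ?mulr1n ?mulr0n; try lia; lra.
Qed.

Lemma mulmx_Pmat_col0 (F : nat -> R) n (j : 'I_n) : (3 <= n)%N -> j = 0%N :> nat ->
  (\row_(i < n) F i *m Pmat R n) 0 j
  = 2/3 * \sum_(i < n) F i + (F 0%N + F 1%N + F n.-1) / 6.
Proof.
move=> hn j0; have col0 (i : 'I_n) : F i * Pentry R n i 0 = 2/3 * F i +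
    (F i * (i == 0%N :> nat)%:R + F i * (i == 1%N :> nat)%:R
     + F i * (i == n.-1 :> nat)%:R) / 6.
  by rewrite Pentry_col0 //; ring.
rewrite !mxE; under eq_bigr => i _ do rewrite !mxE j0 col0.
rewrite big_split -mulr_sumr -mulr_suml !big_split /= !sum_mul_eq_nat.
have [-> -> ->] : [/\ (0 < n)%N, (1 < n)%N & (n.-1 < n)%N] by split; lia.
by rewrite !mul1r.
Qed.

Lemma mulmx_Pmat_col (F : nat -> R) n (j : 'I_n) : (3 <= n)%N -> (0 < j)%N ->
  F n = 0 -> (\row_(i < n) F i *m Pmat R n) 0 j = (F j.-1 + F j.+1) / 6.
Proof.
move=> hn j_gt0 Fn; have colj (i : 'I_n) : F i * Pentry R n i j
    = (F i * (i == j.-1 :> nat)%:R + F i * (i == j.+1 :> nat)%:R) / 6.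
  by rewrite Pentry_col ?j_gt0 ?ltn_ord //; ring.
rewrite !mxE; under eq_bigr => i _ do rewrite !mxE colj.
rewrite -mulr_suml big_split /= !sum_mul_eq_nat (leq_ltn_trans (leq_pred j)) //.
move: (ltn_ord j); rewrite leq_eqVlt => /orP[/eqP jn|->]; last by rewrite !mul1r.
by rewrite jn ltnn Fn mul1r mulr0 addr0.
Qed.

Lemma Pmat_fixed_interior {n} (p : 'rV[R]_n) : (3 <= n)%N ->
  (forall j : 'I_n, (0 < j)%N -> (p *m Pmat R n) 0 j = p 0 j) ->
  forall i : 'I_n, p 0 i = row_nat p n.-1 * (balancing (n - i))%:~R.
Proof.
move=> hn fixed i; pose x k := row_nat p (n - k).
have x_rec m : (m.+2 <= n)%N -> x m.+2 = 6 * x m.+1 - x m.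
  move=> hm; have hj : (n - m.+1 < n)%N by lia.
  have hj0 : (0 < Ordinal hj)%N by rewrite /=; lia.
  have := fixed _ hj0.
  rewrite -{1}(row_natK p) (mulmx_Pmat_col _ _ _ hn hj0 (row_nat_out p _ (leqnn n))).
  rewrite -row_natE /x /=.
  have -> : ((n - m.+1).-1 = n - m.+2)%N by lia.
  have -> : ((n - m.+1).+1 = n - m)%N by lia.
  lra.
have x0 : x 0%N = 0 by rewrite /x subn0 row_nat_out.
have := @balancing_rec _ n x x0 x_rec _ (leq_subr i n).
by rewrite /x subn1 subKn 1?ltnW // row_natE.
Qed.

Lemma balancing_row_fixed n (c : R) : (3 <= n)%N -> c * (cobalancing n.+1)%:~R = 2 ->
  let v := \row_(i < n) (c * (balancing (n - i))%:~R) in v *m Pmat R n = v.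
Proof.
move=> hn cb v; pose F k := c * (balancing (n - k))%:~R.
apply/rowP => j; rewrite [RHS]mxE; case: (posnP j) => [j0|j_gt0].
  have F_sum : \sum_(i < n) F i = 1.
    by move: cb; rewrite /F -mulr_sumr -sum_balancing; lra.
  rewrite (mulmx_Pmat_col0 F) // F_sum /F j0 subn0.
  have := cobalancingSS_balancing n.-1; rewrite prednK ?(leq_trans _ hn) // => hb.
  have {}hb : 2 * (cobalancing n.+1)%:~R
              = 5 * (balancing n)%:~R - (balancing n.-1)%:~R - 1 :> R.
    by rewrite -[2]/(2%:~R) -intrM hb !intrB intrM.
  have {}hb : c * (5 * (balancing n)%:~R - (balancing n.-1)%:~R - 1) = 4.
    by rewrite -hb mulrCA cb; lra.
  have -> : (n - n.-1 = 1)%N by lia.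
  by rewrite subn1 (_ : balancing 1 = 1) //; lra.
rewrite (mulmx_Pmat_col F) //; last by rewrite /F subnn mulr0.
have := ltn_ord j; rewrite /F => j_lt.
have -> : (n - j.-1 = (n - j.+1).+2)%N by lia.
have -> : (n - j = (n - j.+1).+1)%N by lia.
by rewrite balancingSS intrB intrM; lra.
Qed.
End Chain.

Theorem theorem2p1 (R : realFieldType) (n : nat) (hn : (3 <= n)%N) :
  let v : 'rV[R]_n :=
    \row_(i < n) (2 * (balancing (n - i))%:~R / (cobalancing n.+1)%:~R) in
  [/\ prob_vec v, v *m Pmat R n = v &
      forall p : 'rV[R]_n, prob_vec p -> p *m Pmat R n = p -> p = v].
Proof.
move=> v; set b : R := (cobalancing n.+1)%:~R.
have b_gt0 : 0 < b by rewrite ltr0z; case: n hn {v b} => // n _; apply: cobalancing_gt0.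
have vE : v = \row_(i < n) (2 / b * (balancing (n - i))%:~R).
  by apply/rowP => i; rewrite !mxE mulrAC.
have cb : 2 / b * b = 2 by rewrite mulfVK ?gt_eqF.
rewrite vE; split; [split | exact: balancing_row_fixed | ].
- move=> i; rewrite mxE mulr_ge0 ?divr_ge0 ?(ltW b_gt0) // ler0z.
  by case/andP: (balancing_ge0_lt (n - i)).
- under eq_bigr do rewrite mxE.
  by rewrite -mulr_sumr mulrAC sum_balancing divff ?gt_eqF.
move=> p [_ p_sum] p_fixed.
have pE := Pmat_fixed_interior p hn
  (fun j _ => congr1 (fun M : 'rV[R]_n => M 0 j) p_fixed).
set a := row_nat p n.-1 in pE.
have ab : a * b = 2.
  rewrite /b -sum_balancing mulrCA mulr_sumr.
  by under eq_bigr do rewrite -pE; rewrite p_sum mulr1.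
by apply/rowP => i; rewrite pE mxE -ab mulfK ?gt_eqF.
Qed.
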